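(* Let $D\ge 1$. The underlying block design $\mathcal{F}$ of any $(T,N,D)$-tropical code is $(D-1)$-disjunct.
   Context: Tropical arithmetic on $\mathbb{R}\cup\{\infty\}$: $x\oplus y=\min(x,y)$, $x\odot y=x+y$, with $x\oplus\infty=x$ and $x\odot\infty=\infty$. For a matrix $S$ with $T$ rows and $N$ columns and a column vector $\mathbf{x}$ of length $N$, $S\odot\mathbf{x}$ is the vector whose $t$-th entry is $\min_{j}(S_{tj}+x_j)$. A $(T,N,D)$-tropical code is a matrix $S\in(\{0\}\cup\mathbb{N}\cup\{\infty\})^{T\times N}$ such that for any two distinct vectors $\mathbf{x},\mathbf{y}\in(\{0\}\cup\mathbb{N}\cup\{\infty\})^{N}$, each having at most $D$ finite entries, $S\odot\mathbf{x}\ne S\odot\mathbf{y}$. The underlying block design of $S$ is the multiset $\mathcal{F}=\{\{t\in[T]: S_{tj}<\infty\}: j\in[N]\}$ (one block per column, so $|\mathcal{F}|=N$); ''distinct blocks'' means blocks coming from distinct columns (they may coincide as sets). $\mathcal{F}$ is $m$-disjunct if $|Z\setminus(B_1\cup\dots\cup B_m)|\ge 1$ for all distinct blocks $Z,B_1,\dots,B_m\in\mathcal{F}$ (for $m=0$ this means every block is nonempty). *)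

From mathcomp Require Import all_boot all_algebra.
Set Implicit Arguments. Unset Strict Implicit. Unset Printing Implicit Defensive.

(* Tropical semiring on {0} ∪ N ∪ {∞}, encoded as option nat with None = ∞. *)
Definition tplus (x y : option nat) : option nat :=
  match x, y with
  | None, _ => y
  | _, None => x
  | Some a, Some b => Some (minn a b)
  end.

Definition ttimes (x y : option nat) : option nat :=
  match x, y with
  | Some a, Some b => Some (a + b)
  | _, _ => None
  end.

Definition trop_mulv (T N : nat) (S : 'M[option nat]_(T, N))
  (x : {ffun 'I_N -> option nat}) : {ffun 'I_T -> option nat} :=
  [ffun t => \big[tplus/None]_(j < N) ttimes (S t j) (x j)].

Definition nfinite (N : nat) (x : {ffun 'I_N -> option nat}) : nat :=
  #|[set j | x j != None]|.

Definition tropical_code (T N D : nat) (S : 'M[option nat]_(T, N)) : Prop :=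
  forall x y : {ffun 'I_N -> option nat},
    nfinite x <= D -> nfinite y <= D -> x != y ->
    trop_mulv S x != trop_mulv S y.

Definition block (T N : nat) (S : 'M[option nat]_(T, N)) (j : 'I_N) : {set 'I_T} :=
  [set t | S t j != None].

(* m-disjunctness of the family of blocks F (indexed by columns, so a multiset);
   "distinct blocks" = blocks of pairwise distinct columns z, b_1, ..., b_m. *)
Definition disjunct (T N : nat) (m : nat) (F : 'I_N -> {set 'I_T}) : Prop :=
  forall (z : 'I_N) (b : 'I_m -> 'I_N),
    injective b -> (forall i, b i != z) ->
    F z :\: \bigcup_(i < m) F (b i) != set0.

From mathcomp Require Import all_boot all_algebra.
From HB Require Import structures.

Set Implicit Arguments.
Unset Strict Implicit.
Unset Printing Implicit Defensive.

(* If the block of column z is covered by the blocks of D - 1 other columns b_i,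
   put weight 0 on the b_i and infinity elsewhere, and compare with the same
   vector carrying in addition a weight at z exceeding every finite entry of S.
   In each row where S_tz is finite, some b_i already contributes a smaller
   value, so both vectors have the same tropical product, although they are
   distinct and have at most D finite entries. *)

Lemma tplusA : associative tplus.
Proof. by move=> [a|] [b|] [c|] //=; rewrite minnA. Qed.

Lemma tplusC : commutative tplus.
Proof. by move=> [a|] [b|] //=; rewrite minnC. Qed.

Lemma tplus0 : left_id None tplus.
Proof. by case. Qed.

Lemma ttimesr_None a : ttimes a None = None.
Proof. by case: a. Qed.

HB.instance Definition _ :=
  Monoid.isComLaw.Build (option nat) None tplus tplusA tplusC tplus0.

Lemma big_tplus_le (I : finType) (F : I -> option nat) (i : I) (c : nat) :
  F i = Some c -> exists2 c', \big[tplus/None]_j F j = Some c' & c' <= c.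
Proof.
rewrite (bigD1 i) //= => ->.
case: (\big[_/_]_(j | _) _) => [r|] /=; last by exists c.
by exists (minn c r); rewrite ?geq_minl.
Qed.

Lemma trop_mulv_le (T N : nat) (S : 'M[option nat]_(T, N))
    (x : {ffun 'I_N -> option nat}) t j c :
  ttimes (S t j) (x j) = Some c -> exists2 c', trop_mulv S x t = Some c' & c' <= c.
Proof. by rewrite ffunE; apply: big_tplus_le. Qed.

Lemma trop_mulv_set_dominated (T N : nat) (S : 'M[option nat]_(T, N))
    (x : {ffun 'I_N -> option nat}) z k :
  x z = None ->
  (forall t a, S t z = Some a -> exists2 c, trop_mulv S x t = Some c & c <= a + k) ->
  trop_mulv S [ffun j => if j == z then Some k else x j] = trop_mulv S x.
Proof.
move=> xz dom; apply/ffunP => t; rewrite !ffunE (bigD1 z) //= [RHS](bigD1 z) //=.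
rewrite ffunE eqxx xz ttimesr_None.
rewrite (eq_bigr (fun j => ttimes (S t j) (x j))) => [|j /negbTE jz]; last first.
  by rewrite ffunE jz.
case Stz: (S t z) => [a|] //=.
have [c] := dom t a Stz; rewrite ffunE (bigD1 z) //= xz ttimesr_None.
by move=> /= -> ca /=; rewrite (minn_idPr ca).
Qed.

Lemma nfinite_zero_on (N : nat) (A : {pred 'I_N}) :
  nfinite [ffun j => if j \in A then Some 0 else None] = #|A|.
Proof. by apply: eq_card => j; rewrite !inE ffunE; case: (j \in A). Qed.

Lemma nfinite_set (N : nat) (x : {ffun 'I_N -> option nat}) z v :
  nfinite [ffun j => if j == z then v else x j] <= (nfinite x).+1.
Proof.
apply: (@leq_trans #|z |: [set j | x j != None]|).
  by apply/subset_leq_card/subsetP => j; rewrite !inE ffunE; case: (j == z).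
by rewrite cardsU1 -add1n leq_add2r leq_b1.
Qed.

Definition max_entry (T N : nat) (S : 'M[option nat]_(T, N)) : nat :=
  \max_(t < T) \max_(j < N) odflt 0 (S t j).

Lemma entry_le_max (T N : nat) (S : 'M[option nat]_(T, N)) t j a :
  S t j = Some a -> a <= max_entry S.
Proof.
move=> Stj; apply: leq_trans (leq_bigmax t).
by apply: leq_trans (leq_bigmax j); rewrite Stj.
Qed.

Theorem mainTheorem9 (T N D : nat) (S : 'M[option nat]_(T, N)) :
  1 <= D -> tropical_code D S -> disjunct D.-1 (block S).
Proof.
move=> D_gt0 code z b b_inj b_neq_z; apply/negP; rewrite setD_eq0 => /subsetP cover.
have z_notin_b : z \notin codom b by apply/codomP => -[i /esym/eqP]; apply/negP.
pose x := [ffun j => if j \in codom b then Some 0 else None].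
pose y := [ffun j => if j == z then Some (max_entry S) else x j].
have nfx : nfinite x = D.-1 by rewrite nfinite_zero_on card_codom // card_ord.
have nfx_le : nfinite x <= D by rewrite nfx leq_pred.
have nfy : nfinite y <= D by rewrite (leq_trans (nfinite_set _ _ _)) // nfx prednK.
have xz : x z = None by rewrite ffunE (negbTE z_notin_b).
have x_neq_y : x != y by apply/eqP => /ffunP/(_ z); rewrite xz ffunE eqxx.
have := code x y nfx_le nfy x_neq_y.
apply/negP; rewrite negbK eq_sym; apply/eqP/trop_mulv_set_dominated => // t a Stz.
have /cover/bigcupP[i _] : t \in block S z by rewrite inE Stz.
rewrite inE; case Stb: (S t (b i)) => [c|] // _.
have [|c' -> c'c] := @trop_mulv_le _ _ S x t (b i) c.
  by rewrite ffunE codom_f Stb /= addn0.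
by exists c' => //; rewrite (leq_trans c'c) // (leq_trans (entry_le_max Stb)) ?leq_addl.
Qed.
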